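(* Let $r\le s$ be integers, $n=s-r+1$, $\beta_r,\dots,\beta_s$ pairwise distinct real numbers, $B_j=e^{\beta_j}$. For $1\le k\le n$ and $r\le i\le s$ let $$I_{ki}=2i^{2r-s+1-i}\int\frac{d\alpha}{2\pi}\,e^{(k-\frac{n+1}{2})\alpha}\prod_{j=r}^{i}\frac{1}{2\cosh\frac12(\alpha-\beta_j)}\prod_{j=i}^{s}\frac{1}{2\sinh\frac12(\alpha-\beta_j)}$$ (integral along a horizontal line slightly above the real axis), $J_{ki}=I_{ki}+(-1)^{s+i}\overline{I_{ki}}$, and $$F_{ji}=\frac{1}{\prod_{k=r,k\ne j}^{i}(B_j-B_k)\prod_{k=i}^{s}(B_j+B_k)}\ (r\le j\le i),\qquad G_{ji}=\frac{(-1)^n}{\prod_{k=r}^{i}(B_j+B_k)\prod_{k=i,k\ne j}^{s}(B_j-B_k)}\ (i\le j\le s).$$ Then $$I_{ki}=\frac{i^{s+1-i}}{\pi}B_i^{1/2}\Big(\prod_{j=r}^sB_j\Big)^{1/2}\Big(\sum_{j=r}^{i}(-B_j)^{k-1}\beta_jF_{ji}+\sum_{j=i}^{s}B_j^{k-1}(\beta_j+\pi i)G_{ji}\Big),$$ $$J_{ki}=2i^{s-i}B_i^{1/2}\Big(\prod_{j=r}^sB_j\Big)^{1/2}\sum_{j=r}^{i}(-B_j)^{k-1}F_{ji}=-2i^{s-i}B_i^{1/2}\Big(\prod_{j=r}^sB_j\Big)^{1/2}\sum_{j=i}^{s}B_j^{k-1}G_{ji}.$$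
   Context: $i=\sqrt{-1}$ where it appears as a base of powers; $B_j^{1/2}=e^{\beta_j/2}$; the bar denotes complex conjugation. *)

From Stdlib Require Import Reals ZArith List.
From Coquelicot Require Export Coquelicot.
Export ListNotations.
Open Scope R_scope.

Definition Cexp (z : C) : C :=
  (exp (fst z) * cos (snd z), exp (fst z) * sin (snd z)).
Definition Ccosh (z : C) : C := ((Cexp z + Cexp (- z)) / 2)%C.
Definition Csinh (z : C) : C := ((Cexp z - Cexp (- z)) / 2)%C.

Definition Cpowz (z : C) (m : Z) : C :=
  if (0 <=? m)%Z then Cpow z (Z.to_nat m)
  else Cinv (Cpow z (Z.to_nat (- m))).

(* the integers a, a+1, ..., b  (empty if b < a) *)
Definition zrange (a b : Z) : list Z :=
  map (fun m => (a + Z.of_nat m)%Z) (seq 0 (Z.to_nat (b - a + 1))).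

Definition zsumC (a b : Z) (f : Z -> C) : C :=
  fold_right (fun j acc => (f j + acc)%C) (RtoC 0) (zrange a b).
Definition zprodR (a b : Z) (f : Z -> R) : R :=
  fold_right (fun j acc => f j * acc) 1 (zrange a b).
Definition zprodC (a b : Z) (f : Z -> C) : C :=
  fold_right (fun j acc => (f j * acc)%C) (RtoC 1) (zrange a b).
Definition zprodR_ne (a b j0 : Z) (f : Z -> R) : R :=
  fold_right (fun j acc => f j * acc) 1
    (filter (fun j => negb (Z.eqb j j0)) (zrange a b)).

Section Objects.
Variables (r s : Z) (beta : Z -> R).

Definition nn : Z := (s - r + 1)%Z.
Definition BB (j : Z) : R := exp (beta j).

(* integrand of I_{ki} (including the 1/(2 pi) of d alpha / (2 pi)),
   as a function of the complex variable alpha *)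
Definition integrandI (k i : Z) (alpha : C) : C :=
  (/ (2 * PI) * Cexp ((IZR k - (IZR nn + 1) / 2) * alpha)
   * zprodC r i (fun j => / (2 * Ccosh ((alpha - beta j) / 2)))
   * zprodC i s (fun j => / (2 * Csinh ((alpha - beta j) / 2))))%C.

(* I_{ki} computed along the horizontal line Im alpha = eps:
   2 i^{2r-s+1-i} * (improper integral over t in R of integrandI (t + i eps)).
   [Ival_on_line k i eps v] says the improper integral converges and
   the resulting value of I_{ki} is v. *)
Definition Ival_on_line (k i : Z) (eps : R) (v : C) : Prop :=
  exists L : C,
    is_RInt_gen (V := C_R_NormedModule)
      (fun t : R => integrandI k i (RtoC t + RtoC eps * Ci)%C)
      (Rbar_locally m_infty) (Rbar_locally p_infty) L
    /\ v = (2 * Cpowz Ci (2 * r - s + 1 - i) * L)%C.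

Definition Jof (i : Z) (I : C) : C :=
  (I + Cpowz (RtoC (-1)) (s + i) * Cconj I)%C.

Definition FF (j i : Z) : R :=
  / (zprodR_ne r i j (fun k => BB j - BB k) * zprodR i s (fun k => BB j + BB k)).
Definition GG (j i : Z) : R :=
  (-1) ^ Z.to_nat nn /
    (zprodR r i (fun k => BB j + BB k) * zprodR_ne i s j (fun k => BB j - BB k)).

Definition prefac (i : Z) : R :=
  exp (beta i / 2) * sqrt (zprodR r s BB).

Definition RHS_I (k i : Z) : C :=
  (Cpowz Ci (s + 1 - i) / PI * prefac i *
   (zsumC r i (fun j => RtoC ((- BB j) ^ Z.to_nat (k - 1) * beta j * FF j i))
    + zsumC i s (fun j => BB j ^ Z.to_nat (k - 1) * (beta j + PI * Ci) * GG j i)))%C.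

Definition RHS_J1 (k i : Z) : C :=
  (2 * Cpowz Ci (s - i) * prefac i *
   zsumC r i (fun j => RtoC ((- BB j) ^ Z.to_nat (k - 1) * FF j i)))%C.

Definition RHS_J2 (k i : Z) : C :=
  (- (2 * Cpowz Ci (s - i) * prefac i *
      zsumC i s (fun j => RtoC (BB j ^ Z.to_nat (k - 1) * GG j i))))%C.
End Objects.

From Stdlib Require Import Reals ZArith List Lia Lra.
From Coquelicot Require Import Coquelicot.
Open Scope R_scope.

(* Substituting x = e^alpha turns the integrand of I_ki into a constant times
   x^k / P(x), where P(x) = prod_(j<=i) (x + B_j) prod_(j>=i) (x - B_j) has the n + 1
   distinct nonzero real roots -B_j (r <= j <= i) and B_j (i <= j <= s).  As k <= n,
   partial fractions give x^k / P(x) = sum_a w_a x / (x - a) with w_a = a^(k-1) / P'(a),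
   and sum_a w_a = 0.  On the line alpha = t + i eps, x / (x - a) is the t-derivative of
   log (x - a), which behaves like t + i eps at +oo (these terms cancel since the weights
   sum to zero) and tends to ln |a| + i arg (-a) at -oo.  At a = -B_j and a = B_j the
   weight w_a is (-1)^n (-B_j)^(k-1) F_ji, resp. (-1)^n B_j^(k-1) G_ji: this gives I_ki,
   and sum_a w_a = 0 is exactly the identity behind the two expressions for J_ki. *)

Lemma Csub_neq0 (x y : C) : x <> y -> (x - y)%C <> RtoC 0.
Proof. intros H E. apply H. rewrite <- (Cplus_0_l y), <- E. ring. Qed.

Lemma RtoC_neq0 (x : R) : x <> 0 -> RtoC x <> RtoC 0.
Proof. intros H E%RtoC_inj. auto. Qed.

Definition sumR {T} (l : list T) (f : T -> R) : R :=
  fold_right (fun a acc => f a + acc) 0 l.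
Definition sumC {T} (l : list T) (f : T -> C) : C :=
  fold_right (fun a acc => (f a + acc)%C) (RtoC 0) l.
Definition prodR {T} (l : list T) (f : T -> R) : R :=
  fold_right (fun a acc => f a * acc) 1 l.
Definition prodC {T} (l : list T) (f : T -> C) : C :=
  fold_right (fun a acc => (f a * acc)%C) (RtoC 1) l.

Section ListSums.
Context {T : Type}.
Implicit Types (l : list T).

Lemma sumR_ext l f g : (forall a, In a l -> f a = g a) -> sumR l f = sumR l g.
Proof. induction l; intros H; simpl; auto. rewrite H, IHl; auto with datatypes. Qed.

Lemma sumR_app l1 l2 f : sumR (l1 ++ l2) f = sumR l1 f + sumR l2 f.
Proof. induction l1; simpl. ring. unfold sumR in *; simpl. rewrite IHl1. ring. Qed.

Lemma sumR_map {A} (g : A -> T) (l : list A) f : sumR (map g l) f = sumR l (fun a => f (g a)).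
Proof. induction l; simpl; auto. unfold sumR in *; simpl. now rewrite IHl. Qed.

Lemma sumR_plus l f g : sumR l (fun a => f a + g a) = sumR l f + sumR l g.
Proof. induction l; unfold sumR in *; simpl. ring. rewrite IHl. ring. Qed.

Lemma sumR_scal l c f : sumR l (fun a => c * f a) = c * sumR l f.
Proof. induction l; unfold sumR in *; simpl. ring. rewrite IHl. ring. Qed.

Lemma sumC_ext l f g : (forall a, In a l -> f a = g a) -> sumC l f = sumC l g.
Proof. induction l; intros H; simpl; auto. rewrite H, IHl; auto with datatypes. Qed.

Lemma sumC_plus l f g : sumC l (fun a => f a + g a)%C = (sumC l f + sumC l g)%C.
Proof. induction l; unfold sumC in *; simpl. ring. rewrite IHl. ring. Qed.

Lemma sumC_scal l c f : sumC l (fun a => c * f a)%C = (c * sumC l f)%C.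
Proof. induction l; unfold sumC in *; simpl. ring. rewrite IHl. ring. Qed.

Lemma sumC_RtoC l f : sumC l (fun a => RtoC (f a)) = RtoC (sumR l f).
Proof. induction l; unfold sumC, sumR in *; simpl; auto. now rewrite IHl, RtoC_plus. Qed.

Lemma sumC_real_scal l (c : T -> R) (z : T -> C) :
  sumC l (fun a => RtoC (c a) * z a)%C =
  (sumR l (fun a => c a * Re (z a)), sumR l (fun a => c a * Im (z a))).
Proof.
  induction l; unfold sumC, sumR in *; simpl; auto.
  rewrite IHl. destruct (z a). apply injective_projections; simpl; ring.
Qed.

Lemma prodR_ext l f g : (forall a, In a l -> f a = g a) -> prodR l f = prodR l g.
Proof. induction l; intros H; simpl; auto. rewrite H, IHl; auto with datatypes. Qed.

Lemma prodR_app l1 l2 f : prodR (l1 ++ l2) f = prodR l1 f * prodR l2 f.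
Proof. induction l1; simpl. ring. unfold prodR in *; simpl. rewrite IHl1. ring. Qed.

Lemma prodR_map {A} (g : A -> T) (l : list A) f : prodR (map g l) f = prodR l (fun a => f (g a)).
Proof. induction l; simpl; auto. unfold prodR in *; simpl. now rewrite IHl. Qed.

Lemma prodR_opp l f : prodR l (fun a => - f a) = (-1) ^ length l * prodR l f.
Proof. induction l; unfold prodR in *; simpl. ring. rewrite IHl. ring. Qed.

Lemma prodR_neq0 l f : (forall a, In a l -> f a <> 0) -> prodR l f <> 0.
Proof.
  induction l; simpl; intros H. lra.
  apply Rmult_integral_contrapositive_currified; auto with datatypes.
Qed.

Lemma prodC_ext l f g : (forall a, In a l -> f a = g a) -> prodC l f = prodC l g.
Proof. induction l; intros H; simpl; auto. rewrite H, IHl; auto with datatypes. Qed.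

Lemma prodC_app l1 l2 f : prodC (l1 ++ l2) f = (prodC l1 f * prodC l2 f)%C.
Proof. induction l1; simpl. ring. unfold prodC in *; simpl. rewrite IHl1. ring. Qed.

Lemma prodC_neq0 l f : (forall a, In a l -> f a <> RtoC 0) -> prodC l f <> RtoC 0.
Proof.
  induction l; simpl; intros H.
  - apply RtoC_neq0, R1_neq_R0.
  - apply Cmult_neq_0; auto with datatypes.
Qed.

End ListSums.

Lemma zrange_nil a b : (b < a)%Z -> zrange a b = nil.
Proof. intros H. unfold zrange. now replace (Z.to_nat (b - a + 1)) with 0%nat by lia. Qed.

Lemma zrange_cons a b : (a <= b)%Z -> zrange a b = a :: zrange (a + 1) b.
Proof.
  intros H. unfold zrange.
  replace (Z.to_nat (b - a + 1)) with (S (Z.to_nat (b - (a + 1) + 1))) by lia.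
  simpl. f_equal; [lia|]. rewrite <- seq_shift, map_map. apply map_ext. intros m. lia.
Qed.

Lemma zrange_length a b : length (zrange a b) = Z.to_nat (b - a + 1).
Proof. unfold zrange. now rewrite length_map, length_seq. Qed.

Lemma In_zrange j a b : In j (zrange a b) <-> (a <= j <= b)%Z.
Proof.
  unfold zrange. rewrite in_map_iff. split.
  - intros [m [<- Hm]]. apply in_seq in Hm. lia.
  - intros H. exists (Z.to_nat (j - a)). split; [lia|]. apply in_seq. lia.
Qed.

Lemma NoDup_zrange a b : NoDup (zrange a b).
Proof.
  apply NoDup_map_NoDup_ForallPairs; [intros m m' _ _; lia | apply seq_NoDup].
Qed.

Lemma zrange_app a m b : (a <= m + 1)%Z -> (m <= b)%Z ->
  zrange a b = zrange a m ++ zrange (m + 1) b.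
Proof.
  intros H1 H2. remember (Z.to_nat (m + 1 - a)) as n eqn:En.
  revert a H1 En. induction n; intros a H1 En.
  - replace a with (m + 1)%Z by lia. now rewrite (zrange_nil (m + 1) m) by lia.
  - rewrite (zrange_cons a b), (zrange_cons a m) by lia.
    simpl. f_equal. apply IHn; lia.
Qed.

Lemma zrange_filter_neq a b j : (a <= j <= b)%Z ->
  filter (fun l => negb (Z.eqb l j)) (zrange a b) = zrange a (j - 1) ++ zrange (j + 1) b.
Proof.
  intros Hj. rewrite (zrange_app a (j - 1) b) by lia. replace (j - 1 + 1)%Z with j by lia.
  rewrite (zrange_cons j b), filter_app by lia. simpl. rewrite Z.eqb_refl.
  f_equal; apply forallb_filter_id, forallb_forall;
    intros l Hl%In_zrange; apply Bool.negb_true_iff, Z.eqb_neq; lia.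
Qed.

Lemma length_zrange_filter_neq a b j : (a <= j <= b)%Z ->
  length (filter (fun l => negb (Z.eqb l j)) (zrange a b)) = Z.to_nat (b - a).
Proof. intros Hj. rewrite zrange_filter_neq, length_app, !zrange_length by lia. lia. Qed.

Lemma remove_map_inj (f : Z -> R) (L : list Z) (j : Z) :
  (forall y, In y L -> f y = f j -> y = j) ->
  remove Req_EM_T (f j) (map f L) = map f (filter (fun y => negb (Z.eqb y j)) L).
Proof.
  induction L as [|y L IH]; simpl; intros Hinj; auto.
  destruct (Req_EM_T (f j) (f y)) as [E|E], (Z.eqb_spec y j) as [->|Hyj]; simpl.
  - apply IH. auto.
  - exfalso. apply Hyj, Hinj; auto.
  - now destruct E.
  - f_equal. apply IH. auto.
Qed.

(** * Partial fractions with simple real poles *)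

Definition nodeR (l : list R) (y : R) : R := prodR l (fun a => y - a).
Definition nodeC (l : list R) (x : C) : C := prodC l (fun a => x - RtoC a)%C.

(* For [a] in [l], [nodeR (remove _ a l) a] is P'(a) for P = [nodeR l], so [pf_coef l q a]
   is the residue of x^q / P(x) at [a]. *)
Definition pf_coef (l : list R) (q : nat) (a : R) : R :=
  a ^ q / nodeR (remove Req_EM_T a l) a.
Definition pf_sum (l : list R) (q : nat) (x : C) : C :=
  sumC l (fun a => RtoC (pf_coef l q a) / (x - RtoC a))%C.

Lemma nodeC_RtoC l y : nodeC l (RtoC y) = RtoC (nodeR l y).
Proof.
  induction l; simpl; auto. unfold nodeC, nodeR in *; simpl.
  now rewrite IHl, RtoC_mult, RtoC_minus.
Qed.

Lemma nodeC_neq0 l x : (forall a, In a l -> x <> RtoC a) -> nodeC l x <> RtoC 0.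
Proof. intros H. apply prodC_neq0. intros a Ha. now apply Csub_neq0, H. Qed.

Lemma nodeR_neq0 l y : ~ In y l -> nodeR l y <> 0.
Proof. intros H. apply prodR_neq0. intros a Ha E. apply H. now replace y with a by lra. Qed.

Lemma nodeR_remove_neq0 l a : nodeR (remove Req_EM_T a l) a <> 0.
Proof. apply nodeR_neq0, remove_In. Qed.

Lemma pf_coef_cons_self b l q : ~ In b l -> pf_coef (b :: l) q b = b ^ q / nodeR l b.
Proof. intros Hb. unfold pf_coef. now rewrite remove_cons, notin_remove. Qed.

Lemma pf_coef_cons b l q a : a <> b -> pf_coef (b :: l) q a = pf_coef l q a / (a - b).
Proof.
  intros Hab. unfold pf_coef. simpl. destruct (Req_EM_T a b) as [|_]; [easy|].
  unfold nodeR at 1; simpl; fold (nodeR (remove Req_EM_T a l) a).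
  pose proof (nodeR_remove_neq0 l a). field. split; [auto|lra].
Qed.

Section PartialFractionsCons.
Variables (b : R) (l : list R).
Hypothesis Hb : ~ In b l.

Lemma pf_sum_cons q x :
  pf_sum (b :: l) q x =
  (RtoC (b ^ q / nodeR l b) / (x - RtoC b)
   + sumC l (fun a => RtoC (pf_coef l q a) / (RtoC a - RtoC b) / (x - RtoC a)))%C.
Proof.
  unfold pf_sum; simpl. rewrite pf_coef_cons_self by auto. f_equal.
  apply sumC_ext. intros a Ha. assert (Hab : a <> b) by (intros ->; auto).
  rewrite pf_coef_cons, RtoC_div, RtoC_minus by (auto || lra). reflexivity.
Qed.

Lemma partial_fractions_cons_lt q x :
  (forall y, (forall a, In a l -> y <> RtoC a) -> (y ^ q / nodeC l y)%C = pf_sum l q y) ->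
  (forall a, In a (b :: l) -> x <> RtoC a) ->
  (x ^ q / nodeC (b :: l) x)%C = pf_sum (b :: l) q x.
Proof.
  intros IH Hx.
  assert (Hxb : (x - RtoC b)%C <> RtoC 0) by (apply Csub_neq0, Hx; now left).
  assert (Hxl : forall a, In a l -> x <> RtoC a) by (intros; apply Hx; now right).
  assert (Hbl : forall a, In a l -> RtoC b <> RtoC a)
    by (intros a Ha E; apply RtoC_inj in E; subst; auto).
  pose proof (IH x Hxl) as Ex. pose proof (IH (RtoC b) Hbl) as Eb.
  rewrite nodeC_RtoC, <- RtoC_pow, <- RtoC_div in Eb by now apply nodeR_neq0.
  (* 1 / ((a - b) (x - a)) = (1 / (x - b)) (1 / (x - a) - 1 / (b - a)) *)
  rewrite pf_sum_cons, (sumC_ext _ _ (fun a =>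
      / (x - RtoC b) * (RtoC (pf_coef l q a) / (x - RtoC a))
    + - / (x - RtoC b) * (RtoC (pf_coef l q a) / (RtoC b - RtoC a)))%C).
  2: { intros a Ha. pose proof (Hxl a Ha). pose proof (Hbl a Ha).
       field; repeat split; auto using Csub_neq0. }
  rewrite sumC_plus, !sumC_scal. fold (pf_sum l q x) (pf_sum l q (RtoC b)).
  rewrite <- Ex, <- Eb. unfold nodeC at 1; simpl; fold (nodeC l x).
  pose proof (nodeC_neq0 l x Hxl). field; auto.
Qed.

Lemma partial_fractions_cons_succ q x :
  (forall a, In a (b :: l) -> x <> RtoC a) ->
  (x ^ q / nodeC l x)%C = pf_sum l q x ->
  (x ^ q / nodeC (b :: l) x)%C = pf_sum (b :: l) q x ->
  (x ^ S q / nodeC (b :: l) x)%C = pf_sum (b :: l) (S q) x.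
Proof.
  intros Hx El Ebl.
  assert (Hxb : (x - RtoC b)%C <> RtoC 0) by (apply Csub_neq0, Hx; now left).
  assert (Hxl : forall a, In a l -> x <> RtoC a) by (intros; apply Hx; now right).
  pose proof (nodeC_neq0 l x Hxl).
  (* x / (x - b) = 1 + b / (x - b) *)
  transitivity (x ^ q / nodeC l x + RtoC b * (x ^ q / nodeC (b :: l) x))%C.
  { unfold nodeC at 1 3; simpl; fold (nodeC l x). field; auto. }
  rewrite El, Ebl, !pf_sum_cons, Cmult_plus_distr_l, <- sumC_scal, Cplus_assoc,
    (Cplus_comm (pf_sum l q x)), <- Cplus_assoc.
  unfold pf_sum; rewrite <- sumC_plus. f_equal.
  - pose proof (RtoC_neq0 _ (nodeR_neq0 l b Hb)).
    rewrite !RtoC_div, !RtoC_pow by now apply nodeR_neq0. simpl. field; auto.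
  - apply sumC_ext. intros a Ha.
    assert (Hab : (RtoC a - RtoC b)%C <> RtoC 0)
      by (apply Csub_neq0; intros E%RtoC_inj; subst; auto).
    assert (Hxa : (x - RtoC a)%C <> RtoC 0) by now apply Csub_neq0, Hxl.
    pose proof (RtoC_neq0 _ (nodeR_remove_neq0 l a)).
    unfold pf_coef. rewrite !RtoC_div, !RtoC_pow by apply nodeR_remove_neq0. simpl.
    field; auto.
Qed.

End PartialFractionsCons.

Lemma partial_fractions l q x :
  NoDup l -> (forall a, In a l -> x <> RtoC a) -> (q < length l)%nat ->
  (x ^ q / nodeC l x)%C = pf_sum l q x.
Proof.
  intros Hnd. revert q x. induction l as [|b l IH]; simpl; intros q x Hx Hq; [lia|].
  apply NoDup_cons_iff in Hnd as [Hb Hnd].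
  assert (IH' : forall q' y, (q' < length l)%nat -> (forall a, In a l -> y <> RtoC a) ->
                  (y ^ q' / nodeC l y)%C = pf_sum l q' y) by auto.
  destruct (Nat.lt_ge_cases q (length l)) as [Hlt|Hge].
  - apply partial_fractions_cons_lt; auto.
  - destruct q as [|q].
    + destruct l; simpl in Hge; [|lia].
      rewrite pf_sum_cons by auto. unfold nodeC, nodeR; simpl.
      assert (Hxb : (x - RtoC b)%C <> RtoC 0) by (apply Csub_neq0, Hx; now left).
      rewrite Rdiv_1_r. field. auto.
    + apply partial_fractions_cons_succ; [exact Hb | exact Hx | | ].
      * apply IH'; [lia|]. intros; apply Hx; now right.
      * apply partial_fractions_cons_lt; [exact Hb | | exact Hx].
        intros y Hy. apply IH'; [lia | exact Hy].
Qed.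

Lemma sum_pf_coef_eq0 l q : NoDup l -> (S (S q) <= length l)%nat -> sumR l (pf_coef l q) = 0.
Proof.
  intros Hnd Hq. apply RtoC_inj. rewrite <- sumC_RtoC.
  assert (HCi : forall a, In a l -> Ci <> RtoC a) by (intros a _ E; injection E; lra).
  assert (HCia : forall a, In a l -> (Ci - RtoC a)%C <> RtoC 0)
    by (intros; now apply Csub_neq0, HCi).
  (* at x = i, c_a = c_a (x - a) / (x - a) turns the sum into
     x * pf_sum q x - pf_sum (q + 1) x = x * x^q / P(x) - x^(q+1) / P(x) *)
  rewrite (sumC_ext _ _ (fun a => Ci * (RtoC (pf_coef l q a) / (Ci - RtoC a))
                               + RtoC (-1) * (RtoC (pf_coef l (S q) a) / (Ci - RtoC a)))%C).
  - rewrite sumC_plus, !sumC_scal. fold (pf_sum l q Ci) (pf_sum l (S q) Ci).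
    rewrite <- !partial_fractions by (auto || lia).
    pose proof (nodeC_neq0 l Ci HCi). simpl. field. auto.
  - intros a Ha. pose proof (HCia a Ha). pose proof (RtoC_neq0 _ (nodeR_remove_neq0 l a)).
    unfold pf_coef. rewrite !RtoC_div, !RtoC_pow by apply nodeR_remove_neq0. simpl.
    field. auto.
Qed.

Lemma Cexp_add z w : Cexp (z + w) = (Cexp z * Cexp w)%C.
Proof.
  destruct z as [a b], w as [c d]; unfold Cexp; simpl.
  apply injective_projections; simpl; rewrite exp_plus, ?cos_plus, ?sin_plus; ring.
Qed.

Lemma Cexp_RtoC a : Cexp (RtoC a) = RtoC (exp a).
Proof. unfold Cexp; simpl. rewrite cos_0, sin_0. apply injective_projections; simpl; ring. Qed.

Lemma Cexp_neq0 z : Cexp z <> RtoC 0.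
Proof.
  destruct z as [a b]; unfold Cexp; simpl. intros E. injection E as E1 E2.
  pose proof (exp_pos a). pose proof (sin2_cos2 b). unfold Rsqr in *.
  apply Rmult_integral in E1 as [|E1], E2 as [|E2]; try lra.
  rewrite E1, E2 in *. lra.
Qed.

Lemma Cexp_opp z : Cexp (- z) = (/ Cexp z)%C.
Proof.
  assert (E : (Cexp z * Cexp (- z))%C = RtoC 1)
    by now rewrite <- Cexp_add, Cplus_opp_r, Cexp_RtoC, exp_0.
  pose proof (Cexp_neq0 z). rewrite <- (Cmult_1_l (/ Cexp z)), <- E. field. auto.
Qed.

Lemma Cexp_nat_mul (m : nat) z : Cexp (RtoC (INR m) * z) = (Cexp z ^ m)%C.
Proof.
  induction m as [|m IH].
  - simpl. rewrite Cmult_0_l, Cexp_RtoC, exp_0. reflexivity.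
  - rewrite S_INR, RtoC_plus, Cmult_plus_distr_r, Cmult_1_l, Cexp_add, IH. simpl. ring.
Qed.

Lemma Cexp_half_shift (al : C) (b : R) :
  Cexp ((al - RtoC b) / 2) = (Cexp (al / 2) / RtoC (exp (b / 2)))%C.
Proof.
  replace ((al - RtoC b) / 2)%C with (al / 2 + - RtoC (b / 2))%C.
  - now rewrite Cexp_add, Cexp_opp, Cexp_RtoC.
  - unfold Rdiv. rewrite RtoC_mult, RtoC_inv by lra.
    field.
Qed.

Lemma exp_half_sq b : exp b = exp (b / 2) * exp (b / 2).
Proof. rewrite <- exp_plus. f_equal. field. Qed.

Lemma ln_sq_half_exp b : ln (exp b ^ 2) / 2 = b.
Proof.
  replace (exp b ^ 2) with (exp (b + b)) by (rewrite exp_plus; ring).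
  rewrite ln_exp. field.
Qed.

Lemma Cexp_sq_half (al : C) : Cexp al = (Cexp (al / 2) * Cexp (al / 2))%C.
Proof. rewrite <- Cexp_add. f_equal. field. Qed.

Lemma inv_2cosh_half (al : C) (b : R) : Cexp al <> RtoC (- exp b) ->
  (/ (2 * Ccosh ((al - RtoC b) / 2)))%C =
  (Cexp (al / 2) * RtoC (exp (b / 2)) / (Cexp al - RtoC (- exp b)))%C.
Proof.
  unfold Ccosh.
  rewrite Cexp_opp, Cexp_half_shift, Cexp_sq_half, (exp_half_sq b), RtoC_opp, RtoC_mult.
  pose proof (Cexp_neq0 (al / 2)).
  pose proof (RtoC_neq0 _ (Rgt_not_eq _ _ (exp_pos (b / 2)))).
  intros Hal%Csub_neq0. field. repeat split; auto.
Qed.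

Lemma inv_2sinh_half (al : C) (b : R) : Cexp al <> RtoC (exp b) ->
  (/ (2 * Csinh ((al - RtoC b) / 2)))%C =
  (Cexp (al / 2) * RtoC (exp (b / 2)) / (Cexp al - RtoC (exp b)))%C.
Proof.
  unfold Csinh. rewrite Cexp_opp, Cexp_half_shift, Cexp_sq_half, (exp_half_sq b), RtoC_mult.
  pose proof (Cexp_neq0 (al / 2)).
  pose proof (RtoC_neq0 _ (Rgt_not_eq _ _ (exp_pos (b / 2)))).
  intros Hal%Csub_neq0. field. repeat split; auto.
Qed.

Lemma Cpowz_nat z (p : nat) : Cpowz z (Z.of_nat p) = (z ^ p)%C.
Proof. unfold Cpowz. destruct (Z.leb_spec 0 (Z.of_nat p)); [|lia]. now rewrite Nat2Z.id. Qed.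

Lemma Cpowz_succ z m : z <> RtoC 0 -> Cpowz z (m + 1) = (Cpowz z m * z)%C.
Proof.
  intros Hz. unfold Cpowz.
  destruct (Z.leb_spec 0 (m + 1)), (Z.leb_spec 0 m); try lia.
  - replace (Z.to_nat (m + 1)) with (S (Z.to_nat m)) by lia. rewrite Cpow_S. ring.
  - replace m with (-1)%Z by lia. simpl. field. auto.
  - replace (Z.to_nat (- m)) with (S (Z.to_nat (- (m + 1)))) by lia. rewrite Cpow_S.
    field. split; auto. now apply Cpow_nz.
Qed.

Lemma Cpowz_add z m n : z <> RtoC 0 -> Cpowz z (m + n) = (Cpowz z m * Cpowz z n)%C.
Proof.
  intros Hz. induction n as [|n IH|n IH] using Z.peano_ind.
  - rewrite Z.add_0_r. change (Cpowz z 0) with (RtoC 1). ring.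
  - rewrite <- !Z.add_1_r, Z.add_assoc, !Cpowz_succ, IH by auto. ring.
  - assert (A : Cpowz z (m + n) = (Cpowz z (m + Z.pred n) * z)%C)
      by (rewrite <- Cpowz_succ by auto; f_equal; lia).
    assert (B : Cpowz z n = (Cpowz z (Z.pred n) * z)%C)
      by (rewrite <- Cpowz_succ by auto; f_equal; lia).
    rewrite A, B in IH.
    transitivity (Cpowz z (m + Z.pred n) * z / z)%C; [field; auto|].
    rewrite IH. field. auto.
Qed.

Lemma Cpowz_mult_l a b m : a <> RtoC 0 -> b <> RtoC 0 ->
  Cpowz (a * b) m = (Cpowz a m * Cpowz b m)%C.
Proof.
  intros Ha Hb. unfold Cpowz. destruct (0 <=? m)%Z; rewrite Cpow_mult_l; [reflexivity|].
  field. split; now apply Cpow_nz.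
Qed.

Lemma Cpowz_conj z m : z <> RtoC 0 -> Cconj (Cpowz z m) = Cpowz (Cconj z) m.
Proof.
  intros Hz. unfold Cpowz. destruct (0 <=? m)%Z; rewrite <- Cpow_conj; [reflexivity|].
  apply Cinv_conj, Cpow_nz, Hz.
Qed.

Lemma Cpowz_1_l m : Cpowz (RtoC 1) m = RtoC 1.
Proof. unfold Cpowz. destruct (0 <=? m)%Z; rewrite Cpow_1_l; [reflexivity|]. field. Qed.

Lemma Ci_neq0 : Ci <> RtoC 0.
Proof. intros E. injection E. lra. Qed.

Lemma Cm1_neq0 : RtoC (-1) <> RtoC 0.
Proof. intros E%RtoC_inj. lra. Qed.

Lemma Ci_sq : (Ci * Ci)%C = RtoC (-1).
Proof. apply injective_projections; simpl; ring. Qed.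

Lemma Cpowz_double z m : z <> RtoC 0 -> Cpowz z (2 * m) = Cpowz (z * z) m.
Proof. intros Hz. rewrite Cpowz_mult_l, <- Cpowz_add by auto. f_equal. lia. Qed.

Lemma Cpowz_Ci_add_sign m (p : nat) :
  (Cpowz Ci m * RtoC ((-1) ^ p))%C = Cpowz Ci (m + 2 * Z.of_nat p).
Proof.
  rewrite Cpowz_add, Cpowz_double, Ci_sq, Cpowz_nat, RtoC_pow by apply Ci_neq0.
  reflexivity.
Qed.

Lemma Cpowz_m1_odd m : Cpowz (RtoC (-1)) (2 * m + 1) = RtoC (-1).
Proof.
  rewrite Cpowz_succ, Cpowz_double, <- RtoC_mult by apply Cm1_neq0.
  replace (-1 * -1) with 1 by ring. rewrite Cpowz_1_l. apply Cmult_1_l.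
Qed.

Lemma Cconj_Cpowz_Ci m : Cconj (Cpowz Ci m) = (Cpowz (RtoC (-1)) m * Cpowz Ci m)%C.
Proof.
  rewrite Cpowz_conj, <- Cpowz_mult_l by (apply Ci_neq0 || apply Cm1_neq0).
  f_equal. apply injective_projections; simpl; ring.
Qed.

(** * A branch of log (e^(t + i eps) - a) *)

Lemma half_pi_sub_atan_div (x y : R) : 0 < y -> x <> 0 ->
  PI / 2 - atan (x / y) = (if Rlt_dec x 0 then PI else 0) + atan (y / x).
Proof.
  intros Hy Hx. destruct (Rlt_dec x 0) as [Hneg|Hpos].
  - replace (x / y) with (- / (y / - x)) by (field; lra).
    rewrite atan_opp, atan_inv by (apply Rdiv_lt_0_compat; lra).
    replace (y / - x) with (- (y / x)) by (field; lra). rewrite atan_opp. field.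
  - replace (x / y) with (/ (y / x)) by (field; lra).
    rewrite atan_inv by (apply Rdiv_lt_0_compat; lra). ring.
Qed.

Lemma filterlim_exp_m_infty (G : R -> R) : continuous G 0 ->
  filterlim (fun t => G (exp t)) (Rbar_locally m_infty) (locally (G 0)).
Proof. intros HG. eapply filterlim_comp; [apply is_lim_exp_m | exact HG]. Qed.

Lemma filterlim_exp_opp_p_infty (G : R -> R) : continuous G 0 ->
  filterlim (fun t => G (exp (- t))) (Rbar_locally p_infty) (locally (G 0)).
Proof.
  intros HG. eapply filterlim_comp; [|exact HG].
  eapply filterlim_comp; [|apply is_lim_exp_m].
  intros P [M HM]. exists (- M). intros x Hx. apply HM. lra.
Qed.

Definition line (eps t : R) : C := Cexp (t, eps).

(* [line eps t / (line eps t - a)] is the derivative in [t] of [log (line eps t - a)]; for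
   [0 < eps < PI], [line eps t] lies in the upper half plane, and the real and imaginary
   parts of that logarithm are [log_abs_sub] and [arg_sub]. *)
Definition dlog (eps a t : R) : C := (line eps t / (line eps t - RtoC a))%C.
Definition log_abs_sub (eps a t : R) : R :=
  ln ((exp t * cos eps - a) ^ 2 + (exp t * sin eps) ^ 2) / 2.
Definition arg_sub (eps a t : R) : R :=
  PI / 2 - atan ((exp t * cos eps - a) / (exp t * sin eps)).

Section Line.
Variable eps : R.
Hypothesis Heps : 0 < eps < PI.

Let sin_eps_pos : 0 < sin eps.
Proof. apply sin_gt_0; lra. Qed.

Lemma Im_line_pos t : 0 < exp t * sin eps.
Proof. pose proof (exp_pos t). nra. Qed.

Let norm_pos a t : 0 < (exp t * cos eps - a) ^ 2 + (exp t * sin eps) ^ 2.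
Proof.
  pose proof (pow_lt _ 2 (Im_line_pos t)). pose proof (pow2_ge_0 (exp t * cos eps - a)). lra.
Qed.

Lemma line_neq_real t (a : R) : line eps t <> RtoC a.
Proof. intros E. injection E as _ E. pose proof (Im_line_pos t). lra. Qed.

Lemma dlog_eq a t :
  dlog eps a t =
  (((exp t * cos eps) * (exp t * cos eps - a) + (exp t * sin eps) ^ 2)
     / ((exp t * cos eps - a) ^ 2 + (exp t * sin eps) ^ 2),
   - a * (exp t * sin eps) / ((exp t * cos eps - a) ^ 2 + (exp t * sin eps) ^ 2)).
Proof.
  pose proof (norm_pos a t).
  unfold dlog, line, Cexp; simpl.
  apply injective_projections; unfold Cdiv, Cminus, Cplus, Copp, Cinv, Cmult, RtoC; simpl;
    field; nra.
Qed.

Lemma is_derive_log_abs_sub a t : is_derive (log_abs_sub eps a) t (Re (dlog eps a t)).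
Proof.
  rewrite dlog_eq. pose proof (norm_pos a t). unfold log_abs_sub; simpl.
  auto_derive; [lra|]. field. lra.
Qed.

Lemma is_derive_arg_sub a t : is_derive (arg_sub eps a) t (Im (dlog eps a t)).
Proof.
  rewrite dlog_eq. pose proof (norm_pos a t). pose proof (Im_line_pos t). unfold arg_sub; simpl.
  auto_derive; [apply Rgt_not_eq; lra|]. field.
  repeat split; apply Rgt_not_eq; [nra | exact sin_eps_pos | apply exp_pos].
Qed.

Lemma continuous_Re_dlog a t : continuous (fun u => Re (dlog eps a u)) t.
Proof.
  apply (ex_derive_continuous (K := R_AbsRing) (V := R_NormedModule)).
  eapply ex_derive_ext; [intros u; rewrite dlog_eq; simpl; reflexivity|].
  pose proof (norm_pos a t). auto_derive. lra.
Qed.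

Lemma continuous_Im_dlog a t : continuous (fun u => Im (dlog eps a u)) t.
Proof.
  apply (ex_derive_continuous (K := R_AbsRing) (V := R_NormedModule)).
  eapply ex_derive_ext; [intros u; rewrite dlog_eq; simpl; reflexivity|].
  pose proof (norm_pos a t). auto_derive. lra.
Qed.

Lemma log_abs_sub_p_infty a :
  filterlim (fun t => log_abs_sub eps a t - t) (Rbar_locally p_infty) (locally 0).
Proof.
  set (G := fun u => ln ((cos eps - a * u) ^ 2 + sin eps ^ 2) / 2).
  assert (HG : forall u, 0 < (cos eps - a * u) ^ 2 + sin eps ^ 2).
  { intros u. pose proof (pow_lt _ 2 sin_eps_pos). pose proof (pow2_ge_0 (cos eps - a * u)). lra. }
  replace 0 with (G 0).
  2: { unfold G. replace ((cos eps - a * 0) ^ 2 + sin eps ^ 2) with 1.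
       - rewrite ln_1. lra.
       - pose proof (sin2_cos2 eps). unfold Rsqr in *. nra. }
  apply (filterlim_ext (fun t => G (exp (- t)))).
  - intros t. unfold G, log_abs_sub.
    (* factor e^(2t) out of |e^(t + i eps) - a|^2 *)
    replace ((exp t * cos eps - a) ^ 2 + (exp t * sin eps) ^ 2)
      with (exp (t + t) * ((cos eps - a * exp (- t)) ^ 2 + sin eps ^ 2)).
    + rewrite ln_mult, ln_exp by (apply exp_pos || apply HG). field.
    + rewrite exp_plus. pose proof (exp_pos t).
      replace (exp (- t)) with (/ exp t) by (rewrite exp_Ropp; reflexivity). field. lra.
  - apply filterlim_exp_opp_p_infty, (ex_derive_continuous (K := R_AbsRing) (V := R_NormedModule)).
    unfold G. auto_derive. apply HG.
Qed.

Lemma arg_sub_p_infty a : filterlim (arg_sub eps a) (Rbar_locally p_infty) (locally eps).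
Proof.
  set (G := fun u => PI / 2 - atan ((cos eps - a * u) / sin eps)).
  replace eps with (G 0) at 2.
  2: { assert (atan (cos eps / sin eps) = PI / 2 - eps).
       { rewrite <- (atan_tan (PI / 2 - eps)) by lra. unfold tan.
         now rewrite sin_shift, cos_shift. }
       unfold G. rewrite Rmult_0_r, Rminus_0_r. lra. }
  apply (filterlim_ext (fun t => G (exp (- t)))).
  - intros t. unfold G, arg_sub. f_equal. f_equal. pose proof (exp_pos t).
    replace (exp (- t)) with (/ exp t) by (rewrite exp_Ropp; reflexivity).
    field. lra.
  - apply filterlim_exp_opp_p_infty, (ex_derive_continuous (K := R_AbsRing) (V := R_NormedModule)).
    unfold G. auto_derive. lra.
Qed.

Lemma log_abs_sub_m_infty a : a <> 0 ->
  filterlim (log_abs_sub eps a) (Rbar_locally m_infty) (locally (ln (a ^ 2) / 2)).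
Proof.
  intros Ha.
  set (G := fun v => ln ((v * cos eps - a) ^ 2 + (v * sin eps) ^ 2) / 2).
  replace (ln (a ^ 2) / 2) with (G 0) by (unfold G; do 3 f_equal; ring).
  apply (filterlim_exp_m_infty G), (ex_derive_continuous (K := R_AbsRing) (V := R_NormedModule)).
  unfold G. auto_derive. nra.
Qed.

Lemma arg_sub_m_infty a : a <> 0 ->
  filterlim (arg_sub eps a) (Rbar_locally m_infty) (locally (if Rlt_dec 0 a then PI else 0)).
Proof.
  intros Ha. set (c := if Rlt_dec 0 a then PI else 0).
  set (X := fun t => exp t * cos eps - a).
  assert (HX : filterlim X (Rbar_locally m_infty) (locally (- a))).
  { replace (- a) with ((fun v => v * cos eps - a) 0) by ring.
    apply (filterlim_exp_m_infty (fun v => v * cos eps - a)).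
    apply (ex_derive_continuous (K := R_AbsRing) (V := R_NormedModule)).
    auto_derive. auto. }
  assert (Hatan : filterlim (fun t => atan (exp t * sin eps / X t)) (Rbar_locally m_infty)
                    (locally 0)).
  { replace 0 with ((fun v => atan (v * sin eps / (v * cos eps - a))) 0)
      by (rewrite Rmult_0_l, Rdiv_0_l; apply atan_0).
    apply (filterlim_exp_m_infty (fun v => atan (v * sin eps / (v * cos eps - a)))).
    apply (ex_derive_continuous (K := R_AbsRing) (V := R_NormedModule)).
    auto_derive. lra. }
  (* eventually [X t] has the sign of [- a], so the branch of [half_pi_sub_atan_div] is fixed *)
  assert (Hev : Rbar_locally m_infty (fun t => arg_sub eps a t = c + atan (exp t * sin eps / X t))).
  { unfold c. destruct (Rlt_dec 0 a) as [Hpos|Hneg].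
    - apply (filter_imp (fun t => X t < 0)); [|apply (HX (fun y => y < 0)), open_lt; lra].
      intros t Ht. unfold arg_sub.
      rewrite half_pi_sub_atan_div by (apply Im_line_pos || fold (X t); lra).
      fold (X t). destruct (Rlt_dec (X t) 0); [reflexivity | lra].
    - apply (filter_imp (fun t => 0 < X t)); [|apply (HX (fun y => 0 < y)), open_gt; lra].
      intros t Ht. unfold arg_sub.
      rewrite half_pi_sub_atan_div by (apply Im_line_pos || fold (X t); lra).
      fold (X t). destruct (Rlt_dec (X t) 0); [lra | reflexivity]. }
  eapply filterlim_ext_loc; [apply (filter_imp _ _ (fun t E => eq_sym E) Hev)|].
  pose proof (is_lim_plus' _ _ m_infty c 0 (is_lim_const c m_infty) Hatan) as Hlim.
  now rewrite Rplus_0_r in Hlim.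
Qed.

End Line.

(** * Improper integrals along the line *)

Lemma is_RInt_gen_pair (f : R -> C) (fr fi : R -> R) (Fa Fb : (R -> Prop) -> Prop) lr li :
  Filter Fa -> Filter Fb -> (forall t, f t = (fr t, fi t)) ->
  is_RInt_gen fr Fa Fb lr -> is_RInt_gen fi Fa Fb li ->
  is_RInt_gen (V := C_R_NormedModule) f Fa Fb (lr, li).
Proof.
  intros HFa HFb Hf Hr Hi P [e HP].
  pose proof (Hr (ball lr e) (locally_ball lr e)) as Er.
  pose proof (Hi (ball li e) (locally_ball li e)) as Ei.
  unfold filtermapi in *. generalize (filter_and _ _ Er Ei). apply filter_imp.
  intros ab [[yr [Hyr Hbr]] [yi [Hyi Hbi]]].
  exists (yr, yi). split.
  - apply (is_RInt_ext (fun t => (fr t, fi t))); [intros; now rewrite Hf|].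
    now apply (is_RInt_fct_extend_pair (U := R_NormedModule) (V := R_NormedModule)).
  - apply HP. now split.
Qed.

Lemma is_RInt_gen_derive_lim (F f : R -> R) lm lp :
  (forall t, is_derive F t (f t)) -> (forall t, continuous f t) ->
  filterlim F (Rbar_locally m_infty) (locally lm) ->
  filterlim F (Rbar_locally p_infty) (locally lp) ->
  is_RInt_gen f (Rbar_locally m_infty) (Rbar_locally p_infty) (lp - lm).
Proof.
  intros Hd Hc Hm Hp.
  assert (HD : forall t, Derive F t = f t) by (intros; now apply is_derive_unique).
  apply (is_RInt_gen_ext (Derive F)); [apply filter_forall; intros; apply HD|].
  apply is_RInt_gen_Derive; auto; apply filter_forall; intros ab x _.
  - eexists; apply Hd.
  - apply (continuous_ext f); auto.
Qed.

Section WeightedSums.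
Context {T : Type}.
Variables (l : list T) (c : T -> R).

Lemma is_derive_wsum (F f : T -> R -> R) t :
  (forall a, In a l -> is_derive (F a) t (f a t)) ->
  is_derive (fun u => sumR l (fun a => c a * F a u)) t (sumR l (fun a => c a * f a t)).
Proof.
  induction l as [|b l' IH]; simpl; intros H.
  - apply (is_derive_const (K := R_AbsRing) (V := R_NormedModule)).
  - apply (is_derive_plus (fun u => c b * F b u)); auto with datatypes.
    apply is_derive_scal. auto with datatypes.
Qed.

Lemma continuous_wsum (f : T -> R -> R) t :
  (forall a, In a l -> continuous (f a) t) ->
  continuous (fun u => sumR l (fun a => c a * f a u)) t.
Proof.
  induction l as [|b l' IH]; simpl; intros H.
  - apply continuous_const.
  - apply (continuous_plus (fun u => c b * f b u)); auto with datatypes.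
    apply (continuous_scal_r (V := R_NormedModule) (c b) (f b)). auto with datatypes.
Qed.

Lemma filterlim_wsum (F : T -> R -> R) (m : T -> R) (Fl : (R -> Prop) -> Prop) :
  Filter Fl -> (forall a, In a l -> filterlim (F a) Fl (locally (m a))) ->
  filterlim (fun u => sumR l (fun a => c a * F a u)) Fl (locally (sumR l (fun a => c a * m a))).
Proof.
  intros HF. induction l as [|b l' IH]; simpl; intros H.
  - apply filterlim_const.
  - apply (filterlim_comp_2 (G := locally (c b * m b))
             (H := locally (sumR l' (fun a => c a * m a))) (fun u => c b * F b u) _ Rplus);
      auto with datatypes.
    + apply (filterlim_comp _ _ _ (F b) (fun x => c b * x) Fl (locally (m b)));
        auto with datatypes.
      apply (filterlim_scal_r (K := R_AbsRing) (V := R_NormedModule)).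
    + apply (filterlim_plus (V := R_NormedModule)).
Qed.

End WeightedSums.

(* Since the weights [c] sum to zero, the parts [t + i eps] of [log (line eps t - a)] at
   [+oo] cancel, and only the values [ln |a| + i arg (- a)] at [-oo] remain. *)
Section LogDerivativeSums.
Variables (l : list R) (c : R -> R) (eps : R).
Hypotheses (Heps : 0 < eps < PI) (Hl : forall a, In a l -> a <> 0) (Hc : sumR l c = 0).

Let sum_c_mul v : sumR l (fun a => c a * v) = 0.
Proof.
  rewrite (sumR_ext _ _ (fun a => v * c a)) by (intros; ring).
  now rewrite sumR_scal, Hc, Rmult_0_r.
Qed.

Lemma is_RInt_gen_wsum_Re_dlog :
  is_RInt_gen (fun t => sumR l (fun a => c a * Re (dlog eps a t)))
    (Rbar_locally m_infty) (Rbar_locally p_infty) (- sumR l (fun a => c a * (ln (a ^ 2) / 2))).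
Proof.
  rewrite <- (Rminus_0_l (sumR _ _)).
  apply (is_RInt_gen_derive_lim (fun t => sumR l (fun a => c a * log_abs_sub eps a t))).
  - intros t. apply (is_derive_wsum l c (log_abs_sub eps) (fun a u => Re (dlog eps a u))).
    intros; now apply is_derive_log_abs_sub.
  - intros t. apply (continuous_wsum l c (fun a u => Re (dlog eps a u))).
    intros; now apply continuous_Re_dlog.
  - apply (filterlim_wsum l c (log_abs_sub eps)); [apply Rbar_locally_filter|].
    intros; now apply log_abs_sub_m_infty, Hl.
  - apply (filterlim_ext (fun t => sumR l (fun a => c a * (log_abs_sub eps a t - t)))).
    { intros t. rewrite <- (Rplus_0_r (sumR _ _)), <- (sum_c_mul t), <- sumR_plus.
      apply sumR_ext. intros; ring. }
    rewrite <- (sum_c_mul 0).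
    apply (filterlim_wsum l c (fun a t => log_abs_sub eps a t - t)); [apply Rbar_locally_filter|].
    intros; now apply log_abs_sub_p_infty.
Qed.

Lemma is_RInt_gen_wsum_Im_dlog :
  is_RInt_gen (fun t => sumR l (fun a => c a * Im (dlog eps a t)))
    (Rbar_locally m_infty) (Rbar_locally p_infty)
    (- sumR l (fun a => c a * (if Rlt_dec 0 a then PI else 0))).
Proof.
  rewrite <- (Rminus_0_l (sumR _ _)), <- (sum_c_mul eps) at 1.
  apply (is_RInt_gen_derive_lim (fun t => sumR l (fun a => c a * arg_sub eps a t))).
  - intros t. apply (is_derive_wsum l c (arg_sub eps) (fun a u => Im (dlog eps a u))).
    intros; now apply is_derive_arg_sub.
  - intros t. apply (continuous_wsum l c (fun a u => Im (dlog eps a u))).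
    intros; now apply continuous_Im_dlog.
  - apply (filterlim_wsum l c (arg_sub eps)); [apply Rbar_locally_filter|].
    intros; now apply arg_sub_m_infty, Hl.
  - apply (filterlim_wsum l c (arg_sub eps)); [apply Rbar_locally_filter|].
    intros; now apply arg_sub_p_infty.
Qed.

Lemma is_RInt_gen_wsum_dlog :
  is_RInt_gen (V := C_R_NormedModule)
    (fun t => sumC l (fun a => RtoC (c a) * dlog eps a t)%C)
    (Rbar_locally m_infty) (Rbar_locally p_infty)
    (- sumR l (fun a => c a * (ln (a ^ 2) / 2)),
     - sumR l (fun a => c a * (if Rlt_dec 0 a then PI else 0))).
Proof.
  apply is_RInt_gen_pair with (fr := fun t => sumR l (fun a => c a * Re (dlog eps a t)))
                              (fi := fun t => sumR l (fun a => c a * Im (dlog eps a t))).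
  - apply Rbar_locally_filter.
  - apply Rbar_locally_filter.
  - intros t. apply sumC_real_scal.
  - apply is_RInt_gen_wsum_Re_dlog.
  - apply is_RInt_gen_wsum_Im_dlog.
Qed.

End LogDerivativeSums.

(** * The integrand as a rational function of e^alpha *)

Lemma prodC_simple_fractions {T} (L : list T) (h x : C) (e a : T -> R) :
  (forall j, In j L -> x <> RtoC (a j)) ->
  prodC L (fun j => h * RtoC (e j) / (x - RtoC (a j)))%C =
  (h ^ length L * RtoC (prodR L e) / nodeC (map a L) x)%C.
Proof.
  induction L as [|j L IH]; intros Hx; simpl.
  - unfold nodeC; simpl. field.
  - rewrite IH by auto with datatypes. rewrite RtoC_mult.
    assert (nodeC (map a L) x <> RtoC 0).
    { apply nodeC_neq0. intros b (j' & <- & Hj')%in_map_iff. auto with datatypes. }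
    assert (Hxj : (x - RtoC (a j))%C <> RtoC 0) by (apply Csub_neq0, Hx; now left).
    unfold nodeC at 2; simpl; fold (nodeC (map a L) x). field. auto.
Qed.

Lemma Cexp_exponent_balance (K N : nat) (al : C) :
  (Cexp ((RtoC (INR K) - (RtoC (INR N) + 1) / 2) * al) * Cexp (al / 2) ^ S N)%C
  = (Cexp al ^ K)%C.
Proof.
  rewrite <- !Cexp_nat_mul, <- Cexp_add. f_equal.
  rewrite S_INR, RtoC_plus. field.
Qed.

Lemma sqrt_exp b : sqrt (exp b) = exp (b / 2).
Proof. rewrite exp_half_sq. apply sqrt_square. left; apply exp_pos. Qed.

Lemma prodR_exp_half (L : list Z) (beta : Z -> R) :
  prodR L (fun j => exp (beta j / 2)) = sqrt (prodR L (BB beta)).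
Proof.
  induction L as [|j L IH]; simpl. now rewrite sqrt_1.
  unfold prodR in *; simpl. rewrite sqrt_mult_alt, IH by (left; apply exp_pos).
  unfold BB. now rewrite sqrt_exp.
Qed.

Definition roots (r s : Z) (beta : Z -> R) (i : Z) : list R :=
  map (fun j => - BB beta j) (zrange r i) ++ map (BB beta) (zrange i s).

Section Integrand.
Variables (r s : Z) (beta : Z -> R) (k i : Z).
Hypothesis Hi : (r <= i <= s)%Z.

Lemma roots_length : length (roots r s beta i) = S (Z.to_nat (nn r s)).
Proof. unfold roots, nn. rewrite length_app, !length_map, !zrange_length. lia. Qed.

Lemma prefac_split :
  prodR (zrange r i) (fun j => exp (beta j / 2)) * prodR (zrange i s) (fun j => exp (beta j / 2))
  = prefac r s beta i.
Proof.
  unfold prefac, zprodR. fold (prodR (zrange r s) (BB beta)). rewrite <- prodR_exp_half.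
  rewrite (zrange_app r (i - 1) s), (zrange_app r (i - 1) i) by lia.
  replace (i - 1 + 1)%Z with i by lia. rewrite !prodR_app.
  rewrite (zrange_cons i i), (zrange_nil (i + 1) i) by lia. unfold prodR; simpl. ring.
Qed.

Lemma prod_inv_cosh_sinh (al : C) :
  (forall a, In a (roots r s beta i) -> Cexp al <> RtoC a) ->
  (zprodC r i (fun j => / (2 * Ccosh ((al - RtoC (beta j)) / 2)))
   * zprodC i s (fun j => / (2 * Csinh ((al - RtoC (beta j)) / 2))))%C
  = (Cexp (al / 2) ^ S (Z.to_nat (nn r s)) * RtoC (prefac r s beta i)
     / nodeC (roots r s beta i) (Cexp al))%C.
Proof.
  intros Hx. change (zprodC ?a ?b ?f) with (prodC (zrange a b) f).
  set (x := Cexp al). set (h := Cexp (al / 2)).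
  assert (Hneg : forall j, In j (zrange r i) -> x <> RtoC (- BB beta j))
    by (intros j Hj; apply Hx, in_or_app; left; apply in_map_iff; eauto).
  assert (Hpos : forall j, In j (zrange i s) -> x <> RtoC (BB beta j))
    by (intros j Hj; apply Hx, in_or_app; right; apply in_map_iff; eauto).
  rewrite (prodC_ext (zrange r i) _
             (fun j => h * RtoC (exp (beta j / 2)) / (x - RtoC (- BB beta j)))%C)
    by (intros j Hj; now apply inv_2cosh_half, Hneg).
  rewrite (prodC_ext (zrange i s) _
             (fun j => h * RtoC (exp (beta j / 2)) / (x - RtoC (BB beta j)))%C)
    by (intros j Hj; now apply inv_2sinh_half, Hpos).
  rewrite !prodC_simple_fractions by auto.
  unfold roots, nodeC. rewrite prodC_app.
  fold (nodeC (map (fun j => - BB beta j) (zrange r i)) x) (nodeC (map (BB beta) (zrange i s)) x).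
  rewrite <- prefac_split, RtoC_mult.
  replace (S (Z.to_nat (nn r s))) with (length (zrange r i) + length (zrange i s))%nat
    by (rewrite !zrange_length; unfold nn; lia).
  rewrite Cpow_add_r.
  assert (nodeC (map (fun j => - BB beta j) (zrange r i)) x <> RtoC 0)
    by (apply nodeC_neq0; intros a (j & <- & Hj)%in_map_iff; auto).
  assert (nodeC (map (BB beta) (zrange i s)) x <> RtoC 0)
    by (apply nodeC_neq0; intros a (j & <- & Hj)%in_map_iff; auto).
  field. auto.
Qed.

Lemma integrandI_rational (al : C) : (0 <= k)%Z ->
  (forall a, In a (roots r s beta i) -> Cexp al <> RtoC a) ->
  integrandI r s beta k i al =
  (RtoC (prefac r s beta i / (2 * PI)) *
   (Cexp al ^ Z.to_nat k / nodeC (roots r s beta i) (Cexp al)))%C.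
Proof.
  intros Hk Hx. unfold integrandI. rewrite <- Cmult_assoc, prod_inv_cosh_sinh by auto.
  rewrite <- (Cexp_exponent_balance (Z.to_nat k) (Z.to_nat (nn r s))).
  rewrite !INR_IZR_INZ, !Z2Nat.id by (unfold nn; lia).
  pose proof (nodeC_neq0 _ _ Hx). pose proof (RtoC_neq0 _ PI_neq0).
  rewrite RtoC_div, RtoC_mult
    by (apply Rmult_integral_contrapositive_currified; auto using PI_neq0).
  field. auto.
Qed.
End Integrand.

(** * Pole weights and the closed forms *)

Section Weights.
Variables (r s : Z) (beta : Z -> R) (k i : Z).
Hypothesis Hi : (r <= i <= s)%Z.
Hypothesis Hinj : forall j1 j2 : Z, (r <= j1 <= s)%Z -> (r <= j2 <= s)%Z ->
  beta j1 = beta j2 -> j1 = j2.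
Hypothesis Hk : (1 <= k <= nn r s)%Z.

Let BB_pos j : 0 < BB beta j.
Proof. apply exp_pos. Qed.

Let BB_inj j1 j2 : (r <= j1 <= s)%Z -> (r <= j2 <= s)%Z -> BB beta j1 = BB beta j2 -> j1 = j2.
Proof. intros H1 H2 E. apply Hinj; auto. now apply exp_inv. Qed.

Let q := Z.to_nat (k - 1).
Let sign := (-1) ^ Z.to_nat (nn r s).

Definition pole_weight (a : R) : R := pf_coef (roots r s beta i) q a.

Lemma roots_NoDup : NoDup (roots r s beta i).
Proof.
  unfold roots. apply NoDup_app.
  - apply NoDup_map_NoDup_ForallPairs; [|apply NoDup_zrange].
    intros x y Hx%In_zrange Hy%In_zrange E. apply BB_inj; lia || lra.
  - apply NoDup_map_NoDup_ForallPairs; [|apply NoDup_zrange].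
    intros x y Hx%In_zrange Hy%In_zrange E. apply BB_inj; lia || lra.
  - intros a (x & <- & _)%in_map_iff (y & E & _)%in_map_iff.
    pose proof (BB_pos x). pose proof (BB_pos y). lra.
Qed.

Lemma roots_neq0 a : In a (roots r s beta i) -> a <> 0.
Proof.
  unfold roots. intros [(j & <- & _)%in_map_iff|(j & <- & _)%in_map_iff]%in_app_or;
    pose proof (BB_pos j); lra.
Qed.

Lemma nodeR_remove_neg j : (r <= j <= i)%Z ->
  nodeR (remove Req_EM_T (- BB beta j) (roots r s beta i)) (- BB beta j) =
  sign * (zprodR_ne r i j (fun l => BB beta j - BB beta l)
          * zprodR i s (fun l => BB beta j + BB beta l)).
Proof.
  intros Hj.
  change (zprodR_ne r i j ?f) with (prodR (filter (fun l => negb (Z.eqb l j)) (zrange r i)) f).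
  change (zprodR i s ?f) with (prodR (zrange i s) f).
  unfold roots. rewrite remove_app, (remove_map_inj (fun l => - BB beta l)).
  2: { intros y Hy%In_zrange E. apply BB_inj; lia || lra. }
  rewrite (notin_remove _ (map (BB beta) (zrange i s))).
  2: { intros (y & E & _)%in_map_iff. pose proof (BB_pos y). pose proof (BB_pos j). lra. }
  unfold nodeR. rewrite prodR_app, !prodR_map.
  rewrite (prodR_ext _ _ (fun l => - (BB beta j - BB beta l))) by (intros; ring).
  rewrite (prodR_ext (zrange i s) _ (fun l => - (BB beta j + BB beta l))) by (intros; ring).
  rewrite !prodR_opp, length_zrange_filter_neq, zrange_length by lia.
  unfold sign, nn. replace (Z.to_nat (s - r + 1)) with (Z.to_nat (i - r) + Z.to_nat (s - i + 1))%nat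
    by lia.
  rewrite pow_add. ring.
Qed.

Lemma nodeR_remove_pos j : (i <= j <= s)%Z ->
  nodeR (remove Req_EM_T (BB beta j) (roots r s beta i)) (BB beta j) =
  zprodR r i (fun l => BB beta j + BB beta l) * zprodR_ne i s j (fun l => BB beta j - BB beta l).
Proof.
  intros Hj.
  change (zprodR_ne i s j ?f) with (prodR (filter (fun l => negb (Z.eqb l j)) (zrange i s)) f).
  change (zprodR r i ?f) with (prodR (zrange r i) f).
  unfold roots. rewrite remove_app, (remove_map_inj (BB beta) (zrange i s)).
  2: { intros y Hy%In_zrange E. apply BB_inj; lia || lra. }
  rewrite (notin_remove _ (map (fun l => - BB beta l) (zrange r i))).
  2: { intros (y & E & _)%in_map_iff. pose proof (BB_pos y). pose proof (BB_pos j). lra. }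
  unfold nodeR. rewrite prodR_app, !prodR_map.
  f_equal. apply prodR_ext. intros; ring.
Qed.

Let sign_sq : sign * sign = 1.
Proof. unfold sign. rewrite <- Rpow_mult_distr. replace (-1 * -1) with 1 by ring. apply pow1. Qed.

Let sign_neq0 : sign <> 0.
Proof. apply pow_nonzero. lra. Qed.

Let sign_inv : / sign = sign.
Proof. rewrite <- (Rmult_1_r (/ sign)), <- sign_sq, <- Rmult_assoc, Rinv_l by auto. ring. Qed.

Lemma pole_weight_neg j : (r <= j <= i)%Z ->
  pole_weight (- BB beta j) = sign * ((- BB beta j) ^ q * FF r s beta j i).
Proof.
  intros Hj. unfold pole_weight, pf_coef, FF. rewrite nodeR_remove_neg by auto.
  unfold Rdiv. rewrite Rinv_mult, sign_inv. unfold q. ring.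
Qed.

Lemma pole_weight_pos j : (i <= j <= s)%Z ->
  pole_weight (BB beta j) = sign * (BB beta j ^ q * GG r s beta j i).
Proof.
  intros Hj. unfold pole_weight, pf_coef, GG. rewrite nodeR_remove_pos by auto.
  fold sign. unfold Rdiv, q. rewrite <- (Rmult_1_l (BB beta j ^ _ * _)) at 1.
  rewrite <- sign_sq. ring.
Qed.

Lemma sumR_roots (g : R -> R) :
  sumR (roots r s beta i) g
  = sumR (zrange r i) (fun j => g (- BB beta j)) + sumR (zrange i s) (fun j => g (BB beta j)).
Proof. unfold roots. now rewrite sumR_app, !sumR_map. Qed.

Lemma sum_pole_weight_eq0 : sumR (roots r s beta i) pole_weight = 0.
Proof.
  apply sum_pf_coef_eq0; [apply roots_NoDup|]. rewrite roots_length by auto. unfold nn in *. lia.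
Qed.

Definition sum_F : R := sumR (zrange r i) (fun j => (- BB beta j) ^ q * FF r s beta j i).
Definition sum_G : R := sumR (zrange i s) (fun j => BB beta j ^ q * GG r s beta j i).
Definition sum_beta_FG : R :=
  sumR (zrange r i) (fun j => (- BB beta j) ^ q * beta j * FF r s beta j i)
  + sumR (zrange i s) (fun j => BB beta j ^ q * beta j * GG r s beta j i).

Lemma sum_F_add_sum_G : sum_F + sum_G = 0.
Proof.
  apply (Rmult_eq_reg_l sign); [|exact sign_neq0].
  unfold sum_F, sum_G.
  rewrite Rmult_0_r, <- sum_pole_weight_eq0, sumR_roots, Rmult_plus_distr_l, <- !sumR_scal.
  f_equal; apply sumR_ext; intros j Hj%In_zrange; symmetry.
  - now apply pole_weight_neg.
  - now apply pole_weight_pos.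
Qed.

Lemma sum_pole_weight_log :
  sumR (roots r s beta i) (fun a => pole_weight a * (ln (a ^ 2) / 2)) = sign * sum_beta_FG.
Proof.
  unfold sum_beta_FG. rewrite sumR_roots, Rmult_plus_distr_l, <- !sumR_scal.
  f_equal; apply sumR_ext; intros j Hj%In_zrange.
  - rewrite pole_weight_neg by lia. replace ((- BB beta j) ^ 2) with (BB beta j ^ 2) by ring.
    unfold BB. rewrite ln_sq_half_exp. ring.
  - rewrite pole_weight_pos by lia. unfold BB. rewrite ln_sq_half_exp. ring.
Qed.

Lemma sum_pole_weight_arg :
  sumR (roots r s beta i) (fun a => pole_weight a * (if Rlt_dec 0 a then PI else 0))
  = sign * PI * sum_G.
Proof.
  unfold sum_G. rewrite sumR_roots, (sumR_ext (zrange r i) _ (fun _ => 0 * 0)).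
  - rewrite sumR_scal, Rmult_0_l, Rplus_0_l, <- !sumR_scal.
    apply sumR_ext. intros j Hj%In_zrange. rewrite pole_weight_pos by lia.
    destruct (Rlt_dec 0 (BB beta j)); [ring | pose proof (BB_pos j); lra].
  - intros j _. destruct (Rlt_dec 0 (- BB beta j)); [pose proof (BB_pos j); lra | ring].
Qed.

Lemma integrandI_on_line eps t : 0 < eps < PI ->
  integrandI r s beta k i (RtoC t + RtoC eps * Ci)%C
  = sumC (roots r s beta i)
      (fun a => RtoC (prefac r s beta i / (2 * PI) * pole_weight a) * dlog eps a t)%C.
Proof.
  intros Heps.
  replace (RtoC t + RtoC eps * Ci)%C with ((t, eps) : C)
    by (apply injective_projections; simpl; ring).
  assert (Hx : forall a, In a (roots r s beta i) -> line eps t <> RtoC a)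
    by (intros; now apply line_neq_real).
  rewrite integrandI_rational by (auto || lia). fold (line eps t).
  replace (Z.to_nat k) with (S q) by (unfold q; lia).
  rewrite Cpow_S.
  replace (line eps t * line eps t ^ q / nodeC (roots r s beta i) (line eps t))%C
    with (line eps t * (line eps t ^ q / nodeC (roots r s beta i) (line eps t)))%C
    by (unfold Cdiv; ring).
  rewrite partial_fractions
    by (apply roots_NoDup || auto || (rewrite roots_length by auto; unfold q, nn in *; lia)).
  unfold pf_sum. rewrite <- !sumC_scal. apply sumC_ext. intros a Ha.
  unfold dlog, pole_weight. rewrite RtoC_mult. fold q. unfold Cdiv. ring.
Qed.

Lemma RHS_I_eq :
  RHS_I r s beta k i
  = (Cpowz Ci (s + 1 - i) * RtoC (prefac r s beta i / PI) * (sum_beta_FG, (PI * sum_G)%R))%C.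
Proof.
  unfold RHS_I. change (zsumC ?a ?b ?f) with (sumC (zrange a b) f). rewrite sumC_RtoC.
  rewrite (sumC_ext _ _ (fun j => RtoC (BB beta j ^ q * GG r s beta j i) * (beta j, PI))%C).
  2: { intros j _. rewrite <- RtoC_pow. apply injective_projections; simpl; unfold q; ring. }
  rewrite sumC_real_scal. simpl.
  match goal with |- (_ * ?z)%C = (_ * ?w)%C => replace z with w end.
  - rewrite RtoC_div by apply PI_neq0.
    pose proof (RtoC_neq0 _ PI_neq0).
    field. auto.
  - unfold sum_beta_FG, sum_G, q. apply injective_projections; simpl.
    + f_equal. apply sumR_ext. intros; ring.
    + rewrite Rplus_0_l, <- sumR_scal. apply sumR_ext. intros; ring.
Qed.

Lemma Cpowz_Ci_sign_shift :
  (Cpowz Ci (2 * r - s + 1 - i) * RtoC sign)%C = (- Cpowz Ci (s + 1 - i))%C.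
Proof.
  unfold sign. rewrite Cpowz_Ci_add_sign.
  replace (2 * r - s + 1 - i + 2 * Z.of_nat (Z.to_nat (nn r s)))%Z with (s + 1 - i + 2)%Z
    by (unfold nn; lia).
  rewrite Cpowz_add by apply Ci_neq0.
  replace (Cpowz Ci 2) with (Ci * Ci)%C by (unfold Cpowz; simpl; ring). rewrite Ci_sq.
  apply injective_projections; simpl; ring.
Qed.

Lemma Ival_on_line_RHS_I eps : 0 < eps < PI -> Ival_on_line r s beta k i eps (RHS_I r s beta k i).
Proof.
  intros Heps. set (K := prefac r s beta i / (2 * PI)).
  assert (HK : forall v : R -> R, sumR (roots r s beta i) (fun a => K * pole_weight a * v a)
                               = K * sumR (roots r s beta i) (fun a => pole_weight a * v a))
    by (intros v; rewrite <- sumR_scal; apply sumR_ext; intros; ring).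
  eexists. split.
  - eapply is_RInt_gen_ext.
    { apply filter_forall. intros ab t _. symmetry. now apply integrandI_on_line. }
    apply is_RInt_gen_wsum_dlog; [auto | apply roots_neq0 |].
    now rewrite sumR_scal, sum_pole_weight_eq0, Rmult_0_r.
  - rewrite HK, HK, sum_pole_weight_log, sum_pole_weight_arg, RHS_I_eq.
    replace (- (K * (sign * sum_beta_FG)), - (K * (sign * PI * sum_G)))
      with (RtoC (- K * sign) * (sum_beta_FG, (PI * sum_G)%R))%C
      by (apply injective_projections; simpl; ring).
    replace (Cpowz Ci (s + 1 - i)) with (- (Cpowz Ci (2 * r - s + 1 - i) * RtoC sign))%C
      by (rewrite Cpowz_Ci_sign_shift; ring).
    unfold K. rewrite RtoC_mult, RtoC_opp, !RtoC_div, RtoC_mult by (pose proof PI_RGT_0; lra).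
    pose proof (RtoC_neq0 _ PI_neq0).
    field. auto.
Qed.

Lemma Jof_RHS_I : Jof s i (RHS_I r s beta k i) = RHS_J2 r s beta k i.
Proof.
  assert (Hsign : (Cpowz (RtoC (-1)) (s + i) * Cpowz (RtoC (-1)) (s - i + 1))%C = RtoC (-1)).
  { rewrite <- Cpowz_add by apply Cm1_neq0.
    replace (s + i + (s - i + 1))%Z with (2 * s + 1)%Z by lia. apply Cpowz_m1_odd. }
  pose proof (RtoC_neq0 _ PI_neq0) as HPI.
  rewrite RHS_I_eq. unfold Jof, RHS_J2.
  rewrite !Cmult_conj, Cconj_Cpowz_Ci.
  replace (Cconj (RtoC (prefac r s beta i / PI))) with (RtoC (prefac r s beta i / PI))
    by (apply injective_projections; simpl; ring).
  replace (Cconj (sum_beta_FG, (PI * sum_G)%R))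
    with (RtoC sum_beta_FG - Ci * RtoC (PI * sum_G))%C
    by (apply injective_projections; simpl; ring).
  replace ((sum_beta_FG, (PI * sum_G)%R) : C) with (RtoC sum_beta_FG + Ci * RtoC (PI * sum_G))%C
    by (apply injective_projections; simpl; ring).
  change (zsumC i s ?f) with (sumC (zrange i s) f). rewrite sumC_RtoC. fold q sum_G.
  replace (s + 1 - i)%Z with (s - i + 1)%Z by lia. rewrite Cpowz_succ by apply Ci_neq0.
  set (c := Cpowz Ci (s - i)). set (m1 := Cpowz (RtoC (-1)) (s + i)) in *.
  set (m2 := Cpowz (RtoC (-1)) (s - i + 1)) in *.
  transitivity (c * Ci * RtoC (prefac r s beta i / PI) * (2 * Ci * RtoC (PI * sum_G))
                + (m1 * m2 + 1) * (c * Ci * RtoC (prefac r s beta i / PI)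
                                   * (RtoC sum_beta_FG - Ci * RtoC (PI * sum_G))))%C; [ring|].
  replace (m1 * m2 + 1)%C with (RtoC 0)
    by (rewrite Hsign; apply injective_projections; simpl; ring).
  rewrite Cmult_0_l, Cplus_0_r, RtoC_div, RtoC_mult by (pose proof PI_RGT_0; lra).
  transitivity (- (2 * c * RtoC (prefac r s beta i) * RtoC sum_G) * - (Ci * Ci))%C;
    [field; auto | rewrite Ci_sq; ring].
Qed.

Lemma RHS_J1_eq_J2 : RHS_J1 r s beta k i = RHS_J2 r s beta k i.
Proof.
  unfold RHS_J1, RHS_J2. change (zsumC ?a ?b ?f) with (sumC (zrange a b) f).
  rewrite !sumC_RtoC. fold q sum_F sum_G.
  replace sum_F with (- sum_G) by (pose proof sum_F_add_sum_G; lra).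
  rewrite RtoC_opp. ring.
Qed.

End Weights.

Theorem propositionE1 :
  forall (r s : Z) (beta : Z -> R),
    (r <= s)%Z ->
    (forall j1 j2 : Z, (r <= j1 <= s)%Z -> (r <= j2 <= s)%Z ->
       beta j1 = beta j2 -> j1 = j2) ->
    forall k i : Z,
      (1 <= k <= nn r s)%Z -> (r <= i <= s)%Z ->
      (exists delta : R, 0 < delta /\
         forall eps : R, 0 < eps < delta ->
           Ival_on_line r s beta k i eps (RHS_I r s beta k i))
      /\ Jof s i (RHS_I r s beta k i) = RHS_J1 r s beta k i
      /\ RHS_J1 r s beta k i = RHS_J2 r s beta k i.
Proof.
  intros r s beta _ Hinj k i Hk Hi. split; [|split].
  - exists PI. split; [apply PI_RGT_0|]. intros eps Heps. now apply Ival_on_line_RHS_I.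
  - rewrite Jof_RHS_I. symmetry. now apply RHS_J1_eq_J2.
  - now apply RHS_J1_eq_J2.
Qed.
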